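(* Let $R$ be a formal resonant vector field and $\Phi$ a resonant analytic diffeomorphism which is tangent to identity. Then $D\Phi\cdot R$ is a formal resonant vector field.
   Context: Fix $\omega\in\mathbb{R}^d$ and $\lambda_1,\dots,\lambda_n\in\mathbb{C}$; $X$ are periodic variables (Fourier expansions in $e^{i\langle P,X\rangle}$, $P\in\mathbb{Z}^d$), $Y\in\mathbb{C}^n$, $|Q|=\sum Q_j$, $\langle Q,\Lambda\rangle=\sum Q_j\lambda_j$. A formal Fourier–Taylor series is $f=\sum f_{P,Q}e^{i\langle P,X\rangle}Y^Q$ with $\sum_P|f_{P,Q}|^2<\infty$ for each $Q$; it has order $k$ if $f_{P,Q}=0$ for $|Q|\le k-1$, and is resonant if $f_{P,Q}\ne0\Rightarrow i\langle P,\omega\rangle+\langle Q,\Lambda\rangle=0$. A formal vector field is a $(d+n)$-tuple $(R_1,\dots,R_{d+n})$ of formal series; it is resonant if $R_1,\dots,R_d$ are resonant and, for each $j'$, $R_{d+j',P,Q}\ne0\Rightarrow i\langle P,\omega\rangle+\langle Q,\Lambda\rangle-\lambda_{j'}=0$. A map $\Phi$ is tangent to identity if $\Phi_L-X_L$ has order $1$ for $L\le d$ and $\Phi_{d+j'}-Y_{j'}$ has order $2$. Writing $\Phi_j=X_j+\tilde\Phi_j$ ($j\le d$) and $\Phi_{d+j'}=Y_{j'}\tilde\Phi_{d+j'}$, $\Phi$ is resonant if all $\tilde\Phi_1,\dots,\tilde\Phi_{d+n}$ are resonant series. $D\Phi\cdot R$ denotes the Jacobian matrix of $\Phi$ (in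 the variables $X_1,\dots,X_d,Y_1,\dots,Y_n$) applied to $R$. *)

From HB Require Import structures.
From mathcomp Require Import all_boot all_order all_algebra.
From mathcomp Require Import all_classical all_reals all_analysis.
From mathcomp Require Import complex.
Set Implicit Arguments. Unset Strict Implicit. Unset Printing Implicit Defensive.
Import Order.TTheory GRing.Theory Num.Theory.
Import numFieldNormedType.Exports.
Local Open Scope ring_scope.

(* Fourier index P in Z^d and Taylor multi-index Q in N^n. *)
Definition Pidx (d : nat) := {ffun 'I_d -> int}.
Definition Qidx (n : nat) := {ffun 'I_n -> nat}.

(* A (candidate) Fourier--Taylor series: its coefficient family f_{P,Q}. *)
Definition ftseries (R : realType) (d n : nat) := Pidx d -> Qidx n -> R[i].

Definition cabs (R : realType) (z : R[i]) : R := ComplexField.Normc.normc z.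

Definition qsize (n : nat) (Q : Qidx n) : nat := (\sum_(j < n) Q j)%N.
Definition psize (d : nat) (P : Pidx d) : nat := (\sum_(j < d) `|P j|)%N.

Definition is_fts (R : realType) (d n : nat) (f : ftseries R d n) : Prop :=
  forall Q : Qidx n,
    (\esum_(P in [set: Pidx d]) ((cabs (f P Q)) ^+ 2)%:E < +oo)%E.

Definition has_order (R : realType) (d n : nat) (k : nat) (f : ftseries R d n) : Prop :=
  forall P Q, (qsize Q < k)%N -> f P Q = 0.

Definition dotw (R : realType) (d : nat) (omega : 'I_d -> R) (P : Pidx d) : R :=
  \sum_(j < d) (P j)%:~R * omega j.
Definition dotL (R : realType) (n : nat) (lam : 'I_n -> R[i]) (Q : Qidx n) : R[i] :=
  \sum_(j < n) (Q j)%:R * lam j.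

Definition small_div (R : realType) (d n : nat) (omega : 'I_d -> R) (lam : 'I_n -> R[i])
  (P : Pidx d) (Q : Qidx n) : R[i] :=
  'i%C * (dotw omega P)%:C%C + dotL lam Q.

Definition resonant (R : realType) (d n : nat) (omega : 'I_d -> R) (lam : 'I_n -> R[i])
  (f : ftseries R d n) : Prop :=
  forall P Q, f P Q != 0 -> small_div omega lam P Q = 0.

(* A formal vector field (R_1,...,R_{d+n}) is given by its first d components RX
   and its last n components RY. *)
Definition formal_vf (R : realType) (d n : nat)
  (RX : 'I_d -> ftseries R d n) (RY : 'I_n -> ftseries R d n) : Prop :=
  (forall L, is_fts (RX L)) /\ (forall j, is_fts (RY j)).

Definition resonant_vf (R : realType) (d n : nat) (omega : 'I_d -> R) (lam : 'I_n -> R[i])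
  (RX : 'I_d -> ftseries R d n) (RY : 'I_n -> ftseries R d n) : Prop :=
  (forall L, resonant omega lam (RX L)) /\
  (forall j P Q, RY j P Q != 0 -> small_div omega lam P Q - lam j = 0).

Definition qunit (n : nat) (j : 'I_n) : Qidx n := [ffun k => nat_of_bool (k == j)].

Definition monoY (R : realType) (d n : nat) (j : 'I_n) : ftseries R d n :=
  fun P Q => if (P == [ffun => 0]) && (Q == qunit j) then 1 else 0.

Definition mulY (R : realType) (d n : nat) (j : 'I_n) (g : ftseries R d n) : ftseries R d n :=
  fun P Q => if (0 < Q j)%N then g P [ffun k => (Q k - nat_of_bool (k == j))%N] else 0.

Definition sub_series (R : realType) (d n : nat) (f g : ftseries R d n) : ftseries R d n :=
  fun P Q => f P Q - g P Q.

(* The map Phi is described by phiX L = tilde Phi_L = Phi_L - X_L  (L <= d)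
   and PhiY j = Phi_{d+j}. *)

Definition tangent_id (R : realType) (d n : nat)
  (phiX : 'I_d -> ftseries R d n) (PhiY : 'I_n -> ftseries R d n) : Prop :=
  (forall L, has_order 1 (phiX L)) /\
  (forall j, has_order 2 (sub_series (PhiY j) (@monoY R d n j))).

Definition resonant_map (R : realType) (d n : nat) (omega : 'I_d -> R) (lam : 'I_n -> R[i])
  (phiX : 'I_d -> ftseries R d n) (PhiY : 'I_n -> ftseries R d n) : Prop :=
  (forall L, resonant omega lam (phiX L)) /\
  (forall j, exists g : ftseries R d n,
      [/\ is_fts g, PhiY j = mulY j g & resonant omega lam g]).

Definition analytic (R : realType) (d n : nat) (f : ftseries R d n) : Prop :=
  exists (C r rho : R), [/\ 0 < r, 0 < rho &
    forall P Q, cabs (f P Q) <= C * expR (- (r * (psize P)%:R)) * rho ^- (qsize Q)].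

Definition analytic_map (R : realType) (d n : nat)
  (phiX : 'I_d -> ftseries R d n) (PhiY : 'I_n -> ftseries R d n) : Prop :=
  (forall L, analytic (phiX L)) /\ (forall j, analytic (PhiY j)).

Definition dX (R : realType) (d n : nat) (L : 'I_d) (f : ftseries R d n) : ftseries R d n :=
  fun P Q => 'i%C * (P L)%:~R * f P Q.
Definition dY (R : realType) (d n : nat) (k : 'I_n) (f : ftseries R d n) : ftseries R d n :=
  fun P Q => (Q k).+1%:R * f P [ffun j => (Q j + nat_of_bool (j == k))%N].

(* Cauchy product, partial sums over the cube |P1|_oo <= N:
   sum_{|P1|_oo <= N} sum_{Q1 + Q2 = Q} f_{P1,Q1} g_{P-P1,Q2} *)
Definition cube_pt (d N : nat) (c : {ffun 'I_d -> 'I_(2 * N).+1}) : Pidx d :=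
  [ffun j => (c j)%:Z - N%:Z].

Definition prod_partial (R : realType) (d n : nat) (f g : ftseries R d n)
  (P : Pidx d) (Q : Qidx n) (N : nat) : R[i] :=
  \sum_(c : {ffun 'I_d -> 'I_(2 * N).+1})
   \sum_(Q1 : {ffun 'I_n -> 'I_(qsize Q).+1} | [forall j, (Q1 j <= Q j)%N])
     f (cube_pt c) [ffun j => nat_of_ord (Q1 j)] *
     g [ffun j => P j - cube_pt c j] [ffun j => (Q j - Q1 j)%N].

Definition prod_defined (R : realType) (d n : nat) (f g : ftseries R d n) : Prop :=
  forall P Q, cvgn (fun N => (prod_partial f g P Q N : R[i]^o)).

Definition mul_series (R : realType) (d n : nat) (f g : ftseries R d n) : ftseries R d n :=
  fun P Q => limn (fun N => (prod_partial f g P Q N : R[i]^o)).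

(* D Phi . R, with Phi_L = X_L + phiX L, Phi_{d+j} = PhiY j *)
Definition DPhiR_X (R : realType) (d n : nat)
  (phiX : 'I_d -> ftseries R d n) (RX : 'I_d -> ftseries R d n) (RY : 'I_n -> ftseries R d n)
  (L : 'I_d) : ftseries R d n :=
  fun P Q => RX L P Q
    + \sum_(j < d) mul_series (dX j (phiX L)) (RX j) P Q
    + \sum_(k < n) mul_series (dY k (phiX L)) (RY k) P Q.

Definition DPhiR_Y (R : realType) (d n : nat)
  (PhiY : 'I_n -> ftseries R d n) (RX : 'I_d -> ftseries R d n) (RY : 'I_n -> ftseries R d n)
  (m : 'I_n) : ftseries R d n :=
  fun P Q => \sum_(j < d) mul_series (dX j (PhiY m)) (RX j) P Q
    + \sum_(k < n) mul_series (dY k (PhiY m)) (RY k) P Q.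

Definition DPhiR_defined (R : realType) (d n : nat)
  (phiX : 'I_d -> ftseries R d n) (PhiY : 'I_n -> ftseries R d n)
  (RX : 'I_d -> ftseries R d n) (RY : 'I_n -> ftseries R d n) : Prop :=
  (forall L j, prod_defined (dX j (phiX L)) (RX j)) /\
  (forall L k, prod_defined (dY k (phiX L)) (RY k)) /\
  (forall m j, prod_defined (dX j (PhiY m)) (RX j)) /\
  (forall m k, prod_defined (dY k (PhiY m)) (RY k)).

(* Resonance is bookkeeping with the small divisor s(P, Q) = i<P,omega> + <Q,Lambda>: the
   coefficient of a Cauchy product at (P, Q) only involves pairs (p, Q1), (P - p, Q - Q1), along
   which s is additive, while d/dX_L preserves s and d/dY_k lowers it by lambda_k.  Hence every
   term of D Phi . R lies in the eigenspace s = 0 (first d components) or s = lambda_m (last n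
   components).
   For the products to exist and be formal series, note that for fixed Taylor indices the Fourier
   coefficients of a derivative of an analytic series decay exponentially, and that the
   convolution of such a sequence with a square-summable one converges absolutely and is again
   square-summable by Young's inequality, proved via the weighted Cauchy-Schwarz inequality. *)
From HB Require Import structures.
From mathcomp Require Import all_boot all_order all_algebra.
From mathcomp Require Import all_classical all_reals all_analysis.
From mathcomp Require Import complex.
From mathcomp Require Import ring lra zify.
Set Implicit Arguments. Unset Strict Implicit. Unset Printing Implicit Defensive.
Import Order.TTheory GRing.Theory Num.Theory.
Import numFieldNormedType.Exports.
Local Open Scope classical_set_scope.
Local Open Scope ring_scope.

Section ComplexModulus.
Variable R : realType.
Implicit Types (x : R) (z : R[i]).

(* [cabs] is the norm of the normed Z-module [Rcomplex R]. *)
Lemma cabs_ge0 z : 0 <= cabs z.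
Proof. exact: (@normr_ge0 _ (Rcomplex R)). Qed.

Lemma cabs0 : cabs (0 : R[i]) = 0.
Proof. exact: (@normr0 _ (Rcomplex R)). Qed.

Lemma cabsD z1 z2 : cabs (z1 + z2) <= cabs z1 + cabs z2.
Proof. exact: (@ler_normD _ (Rcomplex R)). Qed.

Lemma cabsM z1 z2 : cabs (z1 * z2) = cabs z1 * cabs z2.
Proof. exact: Normc.normcM. Qed.

Lemma cabs_sum I (r : seq I) (P : pred I) (F : I -> R[i]) :
  cabs (\sum_(i <- r | P i) F i) <= \sum_(i <- r | P i) cabs (F i).
Proof. exact: (@ler_norm_sum _ (Rcomplex R)). Qed.

Lemma Re_sum I (r : seq I) (P : pred I) (F : I -> R[i]) :
  complex.Re (\sum_(i <- r | P i) F i) = \sum_(i <- r | P i) complex.Re (F i).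
Proof. exact: (@raddf_sum _ _ (@complex.Re R : Rcomplex R -> R)). Qed.

Lemma Im_sum I (r : seq I) (P : pred I) (F : I -> R[i]) :
  complex.Im (\sum_(i <- r | P i) F i) = \sum_(i <- r | P i) complex.Im (F i).
Proof. exact: (@raddf_sum _ _ (@complex.Im R : Rcomplex R -> R)). Qed.

Lemma cabs_sqr z : cabs z ^+ 2 = complex.Re z ^+ 2 + complex.Im z ^+ 2.
Proof. by case: z => a b; rewrite /cabs /= sqr_sqrtr // addr_ge0 ?sqr_ge0. Qed.

Lemma normc_cabs z : `|z| = (cabs z)%:C%C.
Proof. by case: z => a b; rewrite normc_def. Qed.

Lemma cabs_real x : cabs x%:C%C = `|x|.
Proof. by rewrite /cabs /= expr0n addr0 sqrtr_sqr. Qed.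

Lemma cabs_natr k : cabs (k%:R : R[i]) = k%:R.
Proof. by rewrite -(rmorph_nat (@real_complex R)) cabs_real normr_nat. Qed.

Lemma cabs_intr (m : int) : cabs (m%:~R : R[i]) = `|m|%:R.
Proof. by rewrite -(rmorph_int (@real_complex R)) cabs_real natr_absz intr_norm. Qed.

Lemma cabs_i : cabs ('i%C : R[i]) = 1.
Proof. by rewrite /cabs /= expr0n expr1n add0r sqrtr1. Qed.

Lemma ler_normRe_cabs z : `|complex.Re z| <= cabs z.
Proof.
rewrite -ler_sqr ?nnegrE ?cabs_ge0 // real_normK ?num_real //.
by rewrite cabs_sqr lerDl sqr_ge0.
Qed.

Lemma ler_normIm_cabs z : `|complex.Im z| <= cabs z.
Proof.
rewrite -ler_sqr ?nnegrE ?cabs_ge0 // real_normK ?num_real //.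
by rewrite cabs_sqr lerDr sqr_ge0.
Qed.

Lemma cabs_le_normRe_normIm z : cabs z <= `|complex.Re z| + `|complex.Im z|.
Proof.
set a := (complex.Re z)%:C%C; set b := 'i%C * (complex.Im z)%:C%C.
by have := cabsD a b; rewrite -complexE cabsM cabs_i mul1r !cabs_real.
Qed.

End ComplexModulus.

Section FiniteSums.
Variable R : realType.

Lemma ler_sum_subset_nneg (T : eqType) (s1 s2 : seq T) (w : T -> R) :
  (forall x, 0 <= w x) -> uniq s1 -> uniq s2 -> {subset s1 <= s2} ->
  \sum_(x <- s1) w x <= \sum_(x <- s2) w x.
Proof.
move=> w_ge0 s1_uniq s2_uniq s12.
have -> : \sum_(x <- s1) w x = \sum_(x <- s2 | x \in s1) w x.
  rewrite -[RHS]big_filter; apply: perm_big; apply: uniq_perm; rewrite ?filter_uniq //.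
  by move=> x; rewrite mem_filter; apply/idP/andP => [xs|[]//]; split => //; exact: s12.
by rewrite [X in _ <= X](bigID (mem s1)) /= lerDl sumr_ge0.
Qed.

Lemma cauchy_schwarz_weighted I (r : seq I) (u v : I -> R) :
  (forall i, 0 <= u i) ->
  (\sum_(i <- r) u i * v i) ^+ 2 <= (\sum_(i <- r) u i) * \sum_(i <- r) u i * v i ^+ 2.
Proof.
move=> u_ge0.
have E0 : (\sum_(i <- r) u i * v i) ^+ 2 =
    \sum_(i <- r) \sum_(j <- r) u i * u j * (v i * v j).
  rewrite expr2 mulr_suml; apply: eq_bigr => i _; rewrite mulr_sumr.
  by apply: eq_bigr => j _; rewrite mulrACA.
have E1 : (\sum_(i <- r) u i) * \sum_(i <- r) u i * v i ^+ 2 =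
    \sum_(i <- r) \sum_(j <- r) u i * u j * v j ^+ 2.
  rewrite mulr_suml; apply: eq_bigr => i _; rewrite mulr_sumr.
  by apply: eq_bigr => j _; rewrite mulrA.
have E2 : (\sum_(i <- r) u i) * \sum_(i <- r) u i * v i ^+ 2 =
    \sum_(i <- r) \sum_(j <- r) u i * u j * v i ^+ 2.
  rewrite E1 exchange_big; apply: eq_bigr => i _; apply: eq_bigr => j _.
  by rewrite [u j * _]mulrC.
set L := (\sum_(i <- r) u i * v i) ^+ 2.
set M := (\sum_(i <- r) u i) * _.
(* symmetrise [M] and use [2 v_i v_j <= v_i^2 + v_j^2] termwise *)
suff : 2 * L <= M + M by lra.
rewrite /M {1}E1 E2 /L E0 mulr_sumr -big_split /=; apply: ler_sum => i _.
rewrite mulr_sumr -big_split /=; apply: ler_sum => j _.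
have uij_ge0 : 0 <= u i * u j by rewrite mulr_ge0.
have : 0 <= u i * u j * (v i - v j) ^+ 2 by rewrite mulr_ge0 ?sqr_ge0.
rewrite sqrrB; nra.
Qed.

End FiniteSums.

Section SquareSummable.
Variables (R : realType) (d : nat).
Implicit Types g : Pidx d -> R[i].

Definition sqr_summable g :=
  exists B : R, forall s : seq (Pidx d), uniq s -> \sum_(p <- s) cabs (g p) ^+ 2 <= B.

Lemma sqr_summable0 : sqr_summable (fun=> 0).
Proof. by exists 0 => s _; rewrite big1 // => p _; rewrite cabs0 expr0n. Qed.

Lemma sqr_summableD g1 g2 :
  sqr_summable g1 -> sqr_summable g2 -> sqr_summable (fun P => g1 P + g2 P).
Proof.
move=> [B1 hB1] [B2 hB2]; exists (2 * B1 + 2 * B2) => s s_uniq.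
apply: (@le_trans _ _ (\sum_(p <- s) (2 * cabs (g1 p) ^+ 2 + 2 * cabs (g2 p) ^+ 2))).
  apply: ler_sum => p _.
  have := cabsD (g1 p) (g2 p); have := cabs_ge0 (g1 p + g2 p).
  have := sqr_ge0 (cabs (g1 p) - cabs (g2 p)).
  have := cabs_ge0 (g1 p); have := cabs_ge0 (g2 p).
  set c := cabs (_ + _); set a := cabs (g1 p); set b := cabs (g2 p); nra.
by rewrite big_split /= -!mulr_sumr lerD // ler_pM2l ?ltr0n //; [apply: hB1|apply: hB2].
Qed.

Lemma sqr_summable_sum I (r : seq I) (P : pred I) (F : I -> Pidx d -> R[i]) :
  (forall i, P i -> sqr_summable (F i)) ->
  sqr_summable (fun p => \sum_(i <- r | P i) F i p).
Proof.
move=> hF; elim: r => [|i r IHr].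
  by under eq_fun do rewrite big_nil; exact: sqr_summable0.
under eq_fun do rewrite big_cons.
by case Pi: (P i); [exact: sqr_summableD (hF _ Pi) IHr | exact: IHr].
Qed.

Lemma sqr_summable_bounded g :
  sqr_summable g -> exists2 G, 0 <= G & forall p, cabs (g p) <= G.
Proof.
move=> [B hB]; exists (1 + Num.max B 0) => [|p]; first by rewrite addr_ge0 ?le_max ?lexx ?orbT.
have := hB [:: p] isT; rewrite big_seq1 => gp_le.
have : cabs (g p) ^+ 2 <= Num.max B 0 by rewrite le_max gp_le.
have := cabs_ge0 (g p); move: (cabs _) => a; nra.
Qed.

End SquareSummable.

Lemma is_ftsP (R : realType) (d n : nat) (f : ftseries R d n) :
  is_fts f <-> forall Q, sqr_summable (fun P => f P Q).
Proof.
split=> [fts Q|f_sqr Q].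
  have := fts Q; set E := esum _ _ => E_fin.
  have E_ge0 : (0 <= E)%E by apply: esum_ge0 => P _; rewrite lee_fin sqr_ge0.
  exists (fine E) => s s_uniq; rewrite -lee_fin fineK ?ge0_fin_numE //.
  rewrite -sumEFin fsbig_seq //; apply: esum_ge.
  by exists [set` s] => //; split; [exact: finite_seq|].
have [B hB] := f_sqr Q; apply: (@le_lt_trans _ _ B%:E); last exact: ltry.
apply: ge_ereal_sup => _ [X [X_fin _] <-].
have [s ->] := (finite_seqP X).1 X_fin.
have -> : [set` s] = [set` undup s].
  by apply/seteqP; split => x /=; rewrite mem_undup.
by rewrite -fsbig_seq ?undup_uniq // sumEFin lee_fin hB ?undup_uniq.
Qed.

Section FormalSeries.
Variables (R : realType) (d n : nat).
Implicit Types f g : ftseries R d n.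

Lemma is_ftsD f g : is_fts f -> is_fts g -> is_fts (fun P Q => f P Q + g P Q).
Proof. by move=> /is_ftsP hf /is_ftsP hg; apply/is_ftsP => Q; exact: sqr_summableD. Qed.

Lemma is_fts_sum I (r : seq I) (P : pred I) (F : I -> ftseries R d n) :
  (forall i, P i -> is_fts (F i)) -> is_fts (fun p Q => \sum_(i <- r | P i) F i p Q).
Proof.
move=> hF; apply/is_ftsP => Q; apply: sqr_summable_sum => i Pi.
exact: (proj1 (is_ftsP _) (hF i Pi)).
Qed.

End FormalSeries.

Section Cubes.
Variable d : nat.

Definition cube (N : nat) : seq (Pidx d) :=
  map (@cube_pt d N) (index_enum {ffun 'I_d -> 'I_(2 * N).+1}).

Definition psub (P p : Pidx d) : Pidx d := [ffun j => P j - p j].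

Lemma big_cube (V : nmodType) N (F : Pidx d -> V) :
  \sum_(c : {ffun 'I_d -> 'I_(2 * N).+1}) F (cube_pt c) = \sum_(p <- cube N) F p.
Proof. by rewrite big_map. Qed.

Lemma cube_pt_inj N : injective (@cube_pt d N).
Proof.
move=> c1 c2 /ffunP c12; apply/ffunP => j; apply: val_inj.
by have := c12 j; rewrite !ffunE => /eqP; rewrite (inj_eq (addIr _)) => /eqP [].
Qed.

Lemma cube_uniq N : uniq (cube N).
Proof. by rewrite map_inj_uniq ?index_enum_uniq //; exact: cube_pt_inj. Qed.

Lemma mem_cube N p : (p \in cube N) = [forall j, `|p j| <= N]%N.
Proof.
apply/idP/forallP => [/mapP [c _ ->] j|p_le].
  by rewrite ffunE; have := ltn_ord (c j); move: (nat_of_ord _) => k; lia.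
apply/mapP; exists [ffun j => inord `|(p j + N%:Z)%R|%N]; first by rewrite mem_index_enum.
by apply/ffunP => j; rewrite !ffunE inordK; have := p_le j; move: (p j) => z; lia.
Qed.

Lemma cube_subset N M : (N <= M)%N -> {subset cube N <= cube M}.
Proof.
move=> NM p; rewrite !mem_cube => /forallP p_le; apply/forallP => j.
exact: leq_trans (p_le j) NM.
Qed.

Lemma psub_inj p : injective (fun P => psub P p).
Proof.
move=> P1 P2 /ffunP P12; apply/ffunP => j.
by have := P12 j; rewrite !ffunE => /eqP; rewrite (inj_eq (addIr _)) => /eqP.
Qed.

End Cubes.

Section ExponentialSums.
Variables (R : realType) (q : R).
Hypothesis q01 : 0 <= q < 1.

Lemma sum_geom_le k : \sum_(i < k) q ^+ i <= (1 - q)^-1.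
Proof.
have /andP [q_ge0 q_lt1] := q01.
have q1_neq0 : 1 - q != 0 by rewrite subr_eq0 gt_eqF.
rewrite -[X in X <= _](mulKf q1_neq0) -opprB mulNr -subrX1 opprB.
rewrite -[X in _ <= X]mulr1 ler_wpM2l ?invr_ge0 ?subr_ge0 ?(ltW q_lt1) //.
by rewrite opprB lerBlDr lerDl exprn_ge0.
Qed.

Lemma sum_pow_dist N :
  \sum_(i < (2 * N).+1) q ^+ `|i%:Z - N%:Z|%N <= 2 * \sum_(k < N.+1) q ^+ k.
Proof.
rewrite -(big_mkord xpredT (fun i => q ^+ `|i%:Z - N%:Z|%N)).
elim: N => [|N IHN]; first by rewrite big_nat1 big_ord1 /= expr0 ler_peMl ?ler1n.
have -> : (2 * N.+1).+1 = ((2 * N).+1).+2 by lia.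
rewrite big_nat_recl // big_nat_recr //= subn0 big_ord_recr /=.
have dist_hi : `|((2 * N).+2%:Z - N.+1%:Z)%R|%N = N.+1 by lia.
have shift i : `|(i.+1%:Z - N.+1%:Z)%R|%N = `|(i%:Z - N%:Z)%R|%N by lia.
under eq_bigr do rewrite shift.
by rewrite dist_hi; lra.
Qed.

Lemma sum_cube_pow_psize d N :
  \sum_(p <- cube d N) q ^+ psize p <= (2 * (1 - q)^-1) ^+ d.
Proof.
have /andP [q_ge0 _] := q01.
rewrite -big_cube.
have -> : \sum_(c : {ffun 'I_d -> 'I_(2 * N).+1}) q ^+ psize (cube_pt c) =
    \prod_(j < d) \sum_(i < (2 * N).+1) q ^+ `|i%:Z - N%:Z|%N.
  rewrite bigA_distr_bigA /=; apply: eq_bigr => c _.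
  by rewrite /psize expr_sum; apply: eq_bigr => j _; rewrite ffunE.
rewrite -[d in X in _ <= X]card_ord -prodr_const; apply: ler_prod => j _.
rewrite sumr_ge0 => [|i _]; last exact: exprn_ge0.
by apply: le_trans (sum_pow_dist N) _; rewrite ler_pM2l ?sum_geom_le.
Qed.

End ExponentialSums.

Section CubeSumConvergence.
Variables (R : realType) (d : nat).

Lemma cvgn_sum_cube_nneg (w : Pidx d -> R) :
  (forall p, 0 <= w p) -> (exists K, forall N, \sum_(p <- cube d N) w p <= K) ->
  cvgn (fun N => \sum_(p <- cube d N) w p).
Proof.
move=> w_ge0 [K w_le]; apply: nondecreasing_is_cvgn; last by exists K => _ [N _ <-].
by move=> N M NM; apply: ler_sum_subset_nneg; rewrite ?cube_uniq //; exact: cube_subset.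
Qed.

Lemma cvgn_sum_cube (w v : Pidx d -> R) :
  (forall p, `|w p| <= v p) -> (exists K, forall N, \sum_(p <- cube d N) v p <= K) ->
  cvgn (fun N => \sum_(p <- cube d N) w p).
Proof.
move=> w_le [K v_le].
have abs_cvg : cvgn (fun N => \sum_(p <- cube d N) `|w p|).
  apply: cvgn_sum_cube_nneg => [p|]; first exact: normr_ge0.
  by exists K => N; apply: le_trans (v_le N); exact: ler_sum.
have gap_cvg : cvgn (fun N => \sum_(p <- cube d N) (`|w p| - w p)).
  apply: cvgn_sum_cube_nneg => [p|]; first by rewrite subr_ge0 ler_norm.
  exists (2 * K) => N; apply: le_trans (_ : _ <= \sum_(p <- cube d N) 2 * v p) _.
    apply: ler_sum => p _; have := w_le p; have := ler_norm (w p).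
    have := ler_norm (- w p); rewrite normrN; lra.
  by rewrite -mulr_sumr ler_pM2l.
have -> : (fun N => \sum_(p <- cube d N) w p) =
    (fun N => \sum_(p <- cube d N) `|w p| - \sum_(p <- cube d N) (`|w p| - w p)).
  by apply: funext => N; rewrite -sumrB; apply: eq_bigr => p _; rewrite opprB addrC subrK.
exact: is_cvgB.
Qed.

Lemma cvg_complex (u : nat -> R[i]) (a b : R) :
  (fun N => complex.Re (u N)) @ \oo --> a -> (fun N => complex.Im (u N)) @ \oo --> b ->
  (u : nat -> R[i]^o) @ \oo --> ((a +i* b)%C : R[i]^o).
Proof.
move=> Re_cvg Im_cvg; apply/cvgrPdist_lt => e e_gt0.
have : (0 : R[i]) < e by [].
rewrite ltcE /= => /andP [/eqP Im_e Re_e_gt0].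
have e2_gt0 : 0 < complex.Re e / 2 by rewrite divr_gt0.
have /cvgrPdist_lt/(_ _ e2_gt0) Re_near := Re_cvg.
have /cvgrPdist_lt/(_ _ e2_gt0) Im_near := Im_cvg.
apply: filterS2 Re_near Im_near => N Re_lt Im_lt.
have -> : e = (complex.Re e)%:C%C by move: Im_e; case: (e) => x y /= ->.
rewrite normc_cabs ltcR; apply: le_lt_trans (cabs_le_normRe_normIm _) _.
have -> : complex.Re ((a +i* b)%C - u N) = a - complex.Re (u N) by case: (u N).
have -> : complex.Im ((a +i* b)%C - u N) = b - complex.Im (u N) by case: (u N).
move: Re_lt Im_lt => /=; lra.
Qed.

Lemma sqr_summable_limn (u : Pidx d -> nat -> R[i]) (C : R) :
  (forall P, cvgn (fun N => complex.Re (u P N))) -> (forall P, cvgn (fun N => complex.Im (u P N))) ->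
  (forall N s, uniq s -> \sum_(P <- s) cabs (u P N) ^+ 2 <= C) ->
  (forall P, cvgn (u P : nat -> R[i]^o)) /\
  sqr_summable (fun P => limn (u P : nat -> R[i]^o)).
Proof.
move=> Re_cvg Im_cvg u_le.
pose a P := limn (fun N => complex.Re (u P N)); pose b P := limn (fun N => complex.Im (u P N)).
have u_cvg P : (u P : nat -> R[i]^o) @ \oo --> ((a P +i* b P)%C : R[i]^o).
  exact: cvg_complex (Re_cvg P) (Im_cvg P).
split=> [P|]; first exact: cvgP (u_cvg P).
exists C => s s_uniq.
under eq_bigr do rewrite (cvg_lim _ (u_cvg _)) ?cabs_sqr //=.
have sum_cvg : (fun N => \sum_(P <- s) (complex.Re (u P N) ^+ 2 + complex.Im (u P N) ^+ 2))
    @ \oo --> \sum_(P <- s) (a P ^+ 2 + b P ^+ 2).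
  apply: (cvg_big add_continuous) => // P _; rewrite !expr2.
  by apply: cvgD; apply: cvgM; [exact: Re_cvg|exact: Re_cvg|exact: Im_cvg|exact: Im_cvg].
apply: cvgr_to_le sum_cvg _; apply: nearW => N.
by under eq_bigr do rewrite -cabs_sqr; exact: u_le.
Qed.

End CubeSumConvergence.

Section Convolution.
Variables (R : realType) (d : nat).
Implicit Types f g : Pidx d -> R[i].

Definition exp_decaying f :=
  exists A q : R, [/\ 0 <= A, 0 <= q, q < 1 & forall p, cabs (f p) <= A * q ^+ psize p].

Definition conv_cube f g P N := \sum_(p <- cube d N) f p * g (psub P p).

Lemma conv_young (c : seq (Pidx d)) f g (B : R) (s : seq (Pidx d)) :
  uniq s -> (forall s, uniq s -> \sum_(P <- s) cabs (g P) ^+ 2 <= B) ->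
  \sum_(P <- s) cabs (\sum_(p <- c) f p * g (psub P p)) ^+ 2 <=
  (\sum_(p <- c) cabs (f p)) ^+ 2 * B.
Proof.
move=> s_uniq g_le; set F1 := \sum_(p <- c) cabs (f p).
have F1_ge0 : 0 <= F1 by rewrite sumr_ge0 // => p _; exact: cabs_ge0.
have pointwise P : cabs (\sum_(p <- c) f p * g (psub P p)) ^+ 2 <=
    F1 * \sum_(p <- c) cabs (f p) * cabs (g (psub P p)) ^+ 2.
  apply: le_trans (cauchy_schwarz_weighted _ _ (fun p => cabs_ge0 (f p))).
  rewrite ler_sqr ?nnegrE ?cabs_ge0 ?sumr_ge0 // => [|p _]; last first.
    by rewrite mulr_ge0 ?cabs_ge0.
  by apply: le_trans (cabs_sum _ _ _) _; apply: ler_sum => p _; rewrite cabsM.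
apply: le_trans (ler_sum _ (fun P _ => pointwise P)) _.
rewrite -mulr_sumr expr2 -mulrA ler_wpM2l // exchange_big /= mulr_suml.
apply: ler_sum => p _; rewrite -mulr_sumr ler_wpM2l ?cabs_ge0 //.
rewrite -(big_map (fun P => psub P p) xpredT (fun P => cabs (g P) ^+ 2)).
by apply: g_le; rewrite map_inj_uniq //; exact: psub_inj.
Qed.

Lemma conv_cube_sqr_summable f g :
  exp_decaying f -> sqr_summable g ->
  (forall P, cvgn (conv_cube f g P : nat -> R[i]^o)) /\
  sqr_summable (fun P => limn (conv_cube f g P : nat -> R[i]^o)).
Proof.
move=> [A [q [A_ge0 q_ge0 q_lt1 f_le]]] g_sqr.
have [G G_ge0 g_le] := sqr_summable_bounded g_sqr.
have [B g_sqr_le] := g_sqr.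
have q01 : 0 <= q < 1 by rewrite q_ge0 q_lt1.
set K := (2 * (1 - q)^-1) ^+ d.
have f_sum_le N : \sum_(p <- cube d N) cabs (f p) <= A * K.
  apply: le_trans (ler_sum _ (fun p _ => f_le p)) _.
  by rewrite -mulr_sumr ler_wpM2l // sum_cube_pow_psize.
pose v (p : Pidx d) := A * q ^+ psize p * G.
have v_sum_le : exists K', forall N, \sum_(p <- cube d N) v p <= K'.
  exists (A * K * G) => N; rewrite -mulr_suml ler_wpM2r //.
  by rewrite -mulr_sumr ler_wpM2l // sum_cube_pow_psize.
have term_le P p : cabs (f p * g (psub P p)) <= v p.
  by rewrite cabsM ler_pM ?cabs_ge0.
apply: (@sqr_summable_limn _ _ _ ((A * K) ^+ 2 * B)) => [P|P|N s s_uniq].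
- rewrite /conv_cube; under eq_fun do rewrite Re_sum.
  apply: cvgn_sum_cube v_sum_le => p.
  exact: le_trans (ler_normRe_cabs _) (term_le P p).
- rewrite /conv_cube; under eq_fun do rewrite Im_sum.
  apply: cvgn_sum_cube v_sum_le => p.
  exact: le_trans (ler_normIm_cabs _) (term_le P p).
- rewrite /conv_cube; apply: le_trans (conv_young _ _ s_uniq g_sqr_le) _.
  have B_ge0 : 0 <= B by have := g_sqr_le [::] isT; rewrite big_nil.
  have K_ge0 : 0 <= K by rewrite exprn_ge0 // mulr_ge0 // invr_ge0 subr_ge0 ltW.
  rewrite ler_wpM2r // ler_sqr ?nnegrE ?f_sum_le ?mulr_ge0 //.
  by rewrite sumr_ge0 // => p _; exact: cabs_ge0.
Qed.

End Convolution.

Section Products.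
Variables (R : realType) (d n : nat).
Implicit Types f g : ftseries R d n.

Lemma prod_partial_conv f g P Q N :
  prod_partial f g P Q N =
  \sum_(Q1 : {ffun 'I_n -> 'I_(qsize Q).+1} | [forall j, Q1 j <= Q j]%N)
    conv_cube (fun p => f p [ffun j => nat_of_ord (Q1 j)])
              (fun p => g p [ffun j => (Q j - Q1 j)%N]) P N.
Proof.
rewrite /prod_partial exchange_big /=; apply: eq_bigr => Q1 _.
by rewrite /conv_cube -big_cube.
Qed.

Lemma mul_series_fts f g :
  (forall Q, exp_decaying (fun p => f p Q)) -> is_fts g ->
  prod_defined f g /\ is_fts (mul_series f g).
Proof.
move=> f_dec /is_ftsP g_sqr.
have conv_ok Q (Q1 : {ffun 'I_n -> 'I_(qsize Q).+1}) :=
  conv_cube_sqr_summable (f_dec [ffun j => nat_of_ord (Q1 j)])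
    (g_sqr [ffun j => (Q j - Q1 j)%N]).
have prod_cvg P Q : (prod_partial f g P Q : nat -> R[i]^o) @ \oo -->
    \sum_(Q1 : {ffun 'I_n -> 'I_(qsize Q).+1} | [forall j, Q1 j <= Q j]%N)
      limn (conv_cube (fun p => f p [ffun j => nat_of_ord (Q1 j)])
                      (fun p => g p [ffun j => (Q j - Q1 j)%N]) P : nat -> R[i]^o).
  under eq_cvg do rewrite prod_partial_conv.
  by apply: (cvg_big add_continuous) => // Q1 _; exact: (proj1 (conv_ok Q Q1)).
split=> [P Q|]; first exact: cvgP (prod_cvg P Q).
apply/is_ftsP => Q; rewrite /mul_series.
under eq_fun do rewrite (cvg_lim _ (prod_cvg _ Q)) //.
by apply: sqr_summable_sum => Q1 _; exact: (proj2 (conv_ok Q Q1)).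
Qed.

End Products.

Section AnalyticDecay.
Variable R : realType.

Lemma mul_expR_le (r x : R) : 0 < r -> 0 <= x ->
  x * expR (- (r * x)) <= 2 / r * expR (- (r / 2 * x)).
Proof.
move=> r_gt0 x_ge0; set y := r / 2 * x; set E := expR (- y).
have E_gt0 : 0 < E by exact: expR_gt0.
have sqrE : expR (- (r * x)) = E * E by rewrite /E -expRD; congr expR; rewrite /y; field.
have x_eq : x = 2 / r * y by rewrite /y; field; rewrite gt_eqF.
have yE_le1 : y * E <= 1.
  rewrite -(_ : expR y * E = 1); last by rewrite /E -expRD subrr expR0.
  by rewrite ler_pM2r //; apply: le_trans (expR_ge1Dx y); lra.
rewrite sqrE mulrA ler_pM2r // {1}x_eq.
have : 0 <= r^-1 by rewrite invr_ge0 ltW.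
by move: yE_le1; nra.
Qed.

Variables (d n : nat).
Implicit Types f : ftseries R d n.

Lemma analytic_exp_decay f : analytic f -> exists2 r : R, 0 < r &
  forall Q, exists2 A : R, 0 <= A & forall p, cabs (f p Q) <= A * expR (- r) ^+ psize p.
Proof.
move=> [C [r [rho [r_gt0 rho_gt0 f_le]]]]; exists r => // Q.
have rho_ge0 : 0 <= rho ^- qsize Q by rewrite invr_ge0 exprn_ge0 ?ltW.
exists (`|C| * rho ^- qsize Q) => [|p]; first by rewrite mulr_ge0.
apply: le_trans (f_le p Q) _; rewrite -mulNr expRM_natr mulrAC.
by rewrite ler_wpM2r ?exprn_ge0 ?expR_ge0 // ler_wpM2r // ler_norm.
Qed.

Lemma exp_decaying_dY f k : analytic f -> forall Q, exp_decaying (fun p => dY k f p Q).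
Proof.
move=> /analytic_exp_decay [r r_gt0 f_dec] Q.
have [A A_ge0 f_le] := f_dec [ffun j => (Q j + nat_of_bool (j == k))%N].
exists ((Q k).+1%:R * A), (expR (- r)); split; rewrite ?mulr_ge0 ?expR_ge0 //.
  by rewrite expR_lt1 oppr_lt0.
by move=> p; rewrite /dY cabsM cabs_natr -mulrA ler_wpM2l.
Qed.

Lemma leq_absz_psize (p : Pidx d) (L : 'I_d) : (`|p L| <= psize p)%N.
Proof. by rewrite /psize (bigD1 L) //= leq_addr. Qed.

(* The factor [|p_L|] from differentiating in [X_L] costs half of the decay rate. *)
Lemma exp_decaying_dX f L : analytic f -> forall Q, exp_decaying (fun p => dX L f p Q).
Proof.
move=> /analytic_exp_decay [r r_gt0 f_dec] Q; have [A A_ge0 f_le] := f_dec Q.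
have r2_gt0 : 0 < r / 2 by rewrite divr_gt0.
exists (A * (2 / r)), (expR (- (r / 2))).
split; rewrite ?mulr_ge0 ?divr_ge0 ?invr_ge0 ?expR_ge0 ?(ltW r_gt0) //.
  by rewrite expR_lt1 oppr_lt0.
move=> p; rewrite /dX !cabsM cabs_i mul1r cabs_intr.
apply: le_trans (_ : _ <= (psize p)%:R * (A * expR (- r) ^+ psize p)) _.
  by rewrite ler_pM ?cabs_ge0 ?ler_nat ?leq_absz_psize.
rewrite mulrCA -mulrA ler_wpM2l // -!expRM_natr !mulNr.
exact: mul_expR_le.
Qed.

End AnalyticDecay.

Section Eigenseries.
Variables (R : realType) (d n : nat) (omega : 'I_d -> R) (lam : 'I_n -> R[i]).
Implicit Types (a b : R[i]) (f g : ftseries R d n).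

(* Only the monomials with [i<P,omega> + <Q,Lambda> = a] occur in [f], i.e. [f] lies in the
   [a]-eigenspace of the derivation along the linear field [omega.d/dX + Lambda Y.d/dY]. *)
Definition eigenseries a f := forall P Q, small_div omega lam P Q != a -> f P Q = 0.

Lemma resonantE f : resonant omega lam f <-> eigenseries 0 f.
Proof.
split=> f_res P Q; first by apply: contraNeq => /f_res/eqP.
by apply: contraNeq => /f_res/eqP.
Qed.

Lemma dotw_psub (P p : Pidx d) : dotw omega (psub P p) = dotw omega P - dotw omega p.
Proof. by rewrite /dotw -sumrB; apply: eq_bigr => j _; rewrite ffunE intrB mulrBl. Qed.

Lemma dotL_split (Q Q1 : Qidx n) : (forall j, Q1 j <= Q j)%N ->
  dotL lam Q = dotL lam Q1 + dotL lam [ffun j => (Q j - Q1 j)%N].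
Proof.
move=> Q1_le; rewrite /dotL -big_split; apply: eq_bigr => j _ /=.
by rewrite ffunE -mulrDl -natrD subnKC.
Qed.

Lemma small_div_split (P p : Pidx d) (Q Q1 : Qidx n) : (forall j, Q1 j <= Q j)%N ->
  small_div omega lam P Q =
  small_div omega lam p Q1 + small_div omega lam (psub P p) [ffun j => (Q j - Q1 j)%N].
Proof. by move=> Q1_le; rewrite /small_div (dotL_split Q1_le) dotw_psub rmorphB /=; ring. Qed.

Lemma small_div_shift (P : Pidx d) (Q : Qidx n) k :
  small_div omega lam P [ffun j => (Q j + nat_of_bool (j == k))%N] =
  small_div omega lam P Q + lam k.
Proof.
rewrite /small_div /dotL -addrA; congr (_ + _).
under eq_bigr do rewrite ffunE natrD mulrDl.
rewrite big_split /=; congr (_ + _).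
by rewrite (bigD1 k) //= eqxx mul1r big1 ?addr0 // => j /negbTE ->; rewrite mul0r.
Qed.

Lemma eigenseriesD a f g :
  eigenseries a f -> eigenseries a g -> eigenseries a (fun P Q => f P Q + g P Q).
Proof. by move=> f_eig g_eig P Q sd_neq; rewrite f_eig ?g_eig ?addr0. Qed.

Lemma eigenseries_sum a I (r : seq I) (pr : pred I) (F : I -> ftseries R d n) :
  (forall i, pr i -> eigenseries a (F i)) ->
  eigenseries a (fun P Q => \sum_(i <- r | pr i) F i P Q).
Proof. by move=> F_eig P Q sd_neq; rewrite big1 // => i /F_eig; apply. Qed.

Lemma eigenseries_dX a f L : eigenseries a f -> eigenseries a (dX L f).
Proof. by move=> f_eig P Q sd_neq; rewrite /dX f_eig ?mulr0. Qed.

Lemma eigenseries_dY a f k : eigenseries a f -> eigenseries (a - lam k) (dY k f).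
Proof.
move=> f_eig P Q sd_neq; rewrite /dY f_eig ?mulr0 // small_div_shift.
by apply: contra sd_neq => /eqP <-; rewrite addrK.
Qed.

Lemma eigenseries_mulY f m : resonant omega lam f -> eigenseries (lam m) (mulY m f).
Proof.
move=> /resonantE f_eig P Q sd_neq; rewrite /mulY; case: ifP => // Qm_gt0.
apply: f_eig; apply: contra sd_neq => /eqP sd_eq0.
set Q' := [ffun k => (Q k - nat_of_bool (k == m))%N].
have -> : Q = [ffun j => (Q' j + nat_of_bool (j == m))%N].
  apply/ffunP => j; rewrite !ffunE; case: eqVneq => [->|_] /=.
    by rewrite subn1 addn1 prednK.
  by rewrite subn0 addn0.
by rewrite small_div_shift sd_eq0 add0r.
Qed.

Lemma eigenseries_mul a b f g :
  eigenseries a f -> eigenseries b g -> eigenseries (a + b) (mul_series f g).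
Proof.
move=> f_eig g_eig P Q sd_neq; rewrite /mul_series.
under eq_fun => N.
  rewrite /prod_partial big1 => [|c _]; first over.
  rewrite big1 // => Q1 /forallP Q1_le.
  set p := cube_pt c; set Q1' := [ffun j => nat_of_ord (Q1 j)].
  have Q1'_le j : (Q1' j <= Q j)%N by rewrite ffunE.
  have [sd_a|] := eqVneq (small_div omega lam p Q1') a; last by move/f_eig ->; rewrite mul0r.
  rewrite g_eig ?mulr0 //; apply: contra sd_neq => /eqP sd_b.
  rewrite (small_div_split P p Q1'_le) sd_a; apply/eqP; congr (_ + _); rewrite -sd_b.
  by congr small_div; apply/ffunP => j; rewrite !ffunE.
exact: (@lim_cst R[i]^o).
Qed.

End Eigenseries.

Section DPhiR.
Variables (R : realType) (d n : nat) (omega : 'I_d -> R) (lam : 'I_n -> R[i]).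
Variables (RX : 'I_d -> ftseries R d n) (RY : 'I_n -> ftseries R d n).
Implicit Type F : ftseries R d n.

Definition DPhiR_part F : ftseries R d n := fun P Q =>
  \sum_(j < d) mul_series (dX j F) (RX j) P Q + \sum_(k < n) mul_series (dY k F) (RY k) P Q.

Lemma DPhiR_XE phiX L :
  DPhiR_X phiX RX RY L = fun P Q => RX L P Q + DPhiR_part (phiX L) P Q.
Proof. by apply: funext => P; apply: funext => Q; rewrite /DPhiR_X addrA. Qed.

Hypothesis RXY_fts : formal_vf RX RY.

Lemma DPhiR_part_defined F : analytic F ->
  (forall j, prod_defined (dX j F) (RX j)) /\ (forall k, prod_defined (dY k F) (RY k)).
Proof.
move: RXY_fts => [RX_fts RY_fts] F_an; split=> [j|k].
  exact: (mul_series_fts (exp_decaying_dX j F_an) (RX_fts j)).1.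
exact: (mul_series_fts (exp_decaying_dY k F_an) (RY_fts k)).1.
Qed.

Lemma is_fts_DPhiR_part F : analytic F -> is_fts (DPhiR_part F).
Proof.
move: RXY_fts => [RX_fts RY_fts] F_an; apply: is_ftsD; apply: is_fts_sum.
  move=> j _; exact: (mul_series_fts (exp_decaying_dX j F_an) (RX_fts j)).2.
move=> k _; exact: (mul_series_fts (exp_decaying_dY k F_an) (RY_fts k)).2.
Qed.

Lemma resonant_vfE :
  resonant_vf omega lam RX RY <->
  (forall L, eigenseries omega lam 0 (RX L)) /\ (forall k, eigenseries omega lam (lam k) (RY k)).
Proof.
split=> [[RX_res RY_res]|[RX_eig RY_eig]].
  split=> [L|k P Q]; first exact/resonantE.
  by apply: contraNeq => /RY_res/eqP; rewrite subr_eq0.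
split=> [L|k P Q RY_neq0]; first exact/resonantE.
apply/eqP; rewrite subr_eq0; apply: contraNT RY_neq0 => sd_neq.
by rewrite RY_eig.
Qed.

Lemma eigenseries_DPhiR_part a F :
  resonant_vf omega lam RX RY -> eigenseries omega lam a F ->
  eigenseries omega lam a (DPhiR_part F).
Proof.
move=> /resonant_vfE [RX_eig RY_eig] F_eig; apply: eigenseriesD; apply: eigenseries_sum.
  by move=> j _; rewrite -[a]addr0; apply: eigenseries_mul; [exact: eigenseries_dX|].
(* [dY k] lowers the eigenvalue by [lam k], which the factor [RY k] restores *)
by move=> k _; rewrite -(subrK (lam k) a); apply: eigenseries_mul; [exact: eigenseries_dY|].
Qed.

End DPhiR.

Theorem lemma5p2 (R : realType) (d n : nat) (omega : 'I_d -> R) (lam : 'I_n -> R[i])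
  (RX : 'I_d -> ftseries R d n) (RY : 'I_n -> ftseries R d n)
  (phiX : 'I_d -> ftseries R d n) (PhiY : 'I_n -> ftseries R d n) :
  formal_vf RX RY ->
  resonant_vf omega lam RX RY ->
  analytic_map phiX PhiY ->
  tangent_id phiX PhiY ->
  resonant_map omega lam phiX PhiY ->
  DPhiR_defined phiX PhiY RX RY /\
  formal_vf (DPhiR_X phiX RX RY) (DPhiR_Y PhiY RX RY) /\
  resonant_vf omega lam (DPhiR_X phiX RX RY) (DPhiR_Y PhiY RX RY).
Proof.
move=> RXY_fts RXY_res [phiX_an PhiY_an] _ [phiX_res PhiY_res].
have partX L := DPhiR_part_defined RXY_fts (phiX_an L).
have partY m := DPhiR_part_defined RXY_fts (PhiY_an m).
split.
  split=> [L j|]; first exact: (partX L).1.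
  split=> [L k|]; first exact: (partX L).2.
  by split=> [m j|m k]; [exact: (partY m).1 | exact: (partY m).2].
split.
  split=> [L|m]; last exact: is_fts_DPhiR_part.
  by rewrite DPhiR_XE; apply: is_ftsD (is_fts_DPhiR_part _ _); case: RXY_fts.
apply/resonant_vfE; split=> [L|m]; last first.
  by apply: eigenseries_DPhiR_part => //; have [g [_ -> /eigenseries_mulY]] := PhiY_res m.
have [RX_eig _] := proj1 (resonant_vfE _ _ _ _) RXY_res.
rewrite DPhiR_XE; apply: eigenseriesD (RX_eig L) _.
by apply: eigenseries_DPhiR_part => //; exact/resonantE.
Qed.
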